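(* Let $n\ge2$ and define $\mathscr{G}_{1,n}:=\{A=[a_{j,k}]\in\mathbb{C}^{n\times n}: \widehat{A}\text{ is non-derogatory and }(a_{2,1},\dots,a_{n,1})^T\text{ is a cyclic vector of }\widehat{A}\}$. Let $A=[a_{j,k}],B=[b_{j,k}]\in\mathscr{G}_{1,n}$ with $\pi_n(A)=\pi_n(B)$. If $\widehat{A}=\widehat{B}$ and $(a_{2,1},\dots,a_{n,1})=(b_{2,1},\dots,b_{n,1})$, then $(a_{1,2},\dots,a_{1,n})=(b_{1,2},\dots,b_{1,n})$.
   Context: For $A\in\mathbb{C}^{n\times n}$, $\widehat{A}$ denotes the $(n-1)\times(n-1)$ matrix obtained by deleting the first row and column of $A$. A matrix $X\in\mathbb{C}^{k\times k}$ is non-derogatory if it has a cyclic vector $v$ (i.e. $v,Xv,\dots,X^{k-1}v$ span $\mathbb{C}^k$). $\mathscr{I}^j$ is the set of increasing $j$-tuples in $\{1,\dots,n\}$, $A_I$ the principal submatrix indexed by $I$. The map $\pi_n=(X,Y):\mathbb{C}^{n\times n}\to\mathbb{C}^n\times\mathbb{C}^{n-1}$ is $X_1(A)=a_{1,1}$, $X_j(A)=\sum_{I\in\mathscr{I}^j:i_1=1}\det(A_I)$ ($2\le j\le n$), $Y_j(A)=\sum_{I\in\mathscr{I}^j:i_1\ge2}\det(A_I)$ ($1\le j\le n-1$). *)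

From HB Require Import structures.
From mathcomp Require Import all_boot all_order all_algebra.
Set Implicit Arguments. Unset Strict Implicit. Unset Printing Implicit Defensive.
Import Order.TTheory GRing.Theory Num.Theory.
Local Open Scope ring_scope.

Section Defs.
Variable R : numClosedFieldType.

Definition mxhat m (A : 'M[R]_(m.+1)) : 'M[R]_m :=
  \matrix_(i < m, j < m) A (lift ord0 i) (lift ord0 j).

Definition firstcol m (A : 'M[R]_(m.+1)) : 'cV[R]_m :=
  \col_(i < m) A (lift ord0 i) ord0.

Definition firstrow m (A : 'M[R]_(m.+1)) : 'rV[R]_m :=
  \row_(j < m) A ord0 (lift ord0 j).

Definition krylov k (X : 'M[R]_k) (v : 'cV[R]_k) : 'M[R]_k :=
  \matrix_(i < k, j < k) (X ^+ i *m v) j ord0.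

Definition cyclic_vector k (X : 'M[R]_k) (v : 'cV[R]_k) : Prop :=
  row_full (krylov X v).

Definition non_derogatory k (X : 'M[R]_k) : Prop :=
  exists v : 'cV[R]_k, cyclic_vector X v.

Definition pminor k (A : 'M[R]_k) (I : {set 'I_k}) : R :=
  \det (\matrix_(i < #|I|, j < #|I|) A (enum_val i) (enum_val j)).

Definition piX_coord m (j : nat) (A : 'M[R]_(m.+1)) : R :=
  if j == 1%N then A ord0 ord0
  else \sum_(I : {set 'I_(m.+1)} | (#|I| == j) && (ord0 \in I)) pminor A I.

Definition piY_coord m (j : nat) (A : 'M[R]_(m.+1)) : R :=
  \sum_(I : {set 'I_(m.+1)} | (#|I| == j) && (ord0 \notin I)) pminor A I.

Definition pi_map m (A : 'M[R]_(m.+1)) : 'rV[R]_(m.+1) * 'rV[R]_m :=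
  (\row_(j < m.+1) piX_coord j.+1 A, \row_(j < m) piY_coord j.+1 A).

Definition in_G1 m (A : 'M[R]_(m.+1)) : Prop :=
  non_derogatory (mxhat A) /\ cyclic_vector (mxhat A) (firstcol A).

End Defs.

From mathcomp Require Import all_boot all_algebra all_fingroup.
From mathcomp Require Import ring zify.
Import GRing.Theory.

(* The X-coordinates of pi_n(A) are the coefficients of det (A + t diag(0,1,...,1)),
   by the expansion of det (A + D), D diagonal, in principal minors.  Expanding the
   same determinant along the first row and column gives
   a_11 det (t + Â) - r adj (t + Â) c, with r and c the rest of the first row and
   column.  Hence if A and B share pi_n, Â and c, then d := r_A - r_B satisfies
   d adj (t + Â) c = 0.  As adj (t + Â) (t + Â) = det (t + Â), which has degree
   n - 1 while the entries of the adjugate have smaller degree, this forces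
   d Â^i c = 0 for all i, and so d = 0 because c is a cyclic vector of Â. *)

Set Implicit Arguments.
Unset Strict Implicit.
Unset Printing Implicit Defensive.

Local Open Scope ring_scope.

Section PermEmbedding.
Variables (I T : finType) (g : I -> T).
Hypothesis g_inj : injective g.

Let imgP x : {i | g i = x} + {forall i, g i != x}.
Proof.
case: (pickP (fun i => g i == x)) => [i /eqP hi|h]; first by left; exists i.
by right=> i; rewrite h.
Qed.

Definition emb_perm_fun (s : {perm I}) (x : T) : T :=
  if [pick i | g i == x] is Some i then g (s i) else x.

Lemma emb_perm_funE s i : emb_perm_fun s (g i) = g (s i).
Proof.
rewrite /emb_perm_fun; case: pickP => [j /eqP/g_inj -> //|/(_ i)].
by rewrite eqxx.
Qed.

Lemma emb_perm_fun_out s x : (forall i, g i != x) -> emb_perm_fun s x = x.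
Proof.
move=> h; rewrite /emb_perm_fun; case: pickP => [j hj|//].
by rewrite (negbTE (h j)) in hj.
Qed.

Lemma emb_perm_fun_inj s : injective (emb_perm_fun s).
Proof.
move=> x y; case: (imgP x) => [[i <-]|hx]; case: (imgP y) => [[j <-]|hy].
- by rewrite !emb_perm_funE => /g_inj/perm_inj ->.
- by rewrite emb_perm_funE emb_perm_fun_out // => E; have := hy (s i); rewrite E eqxx.
- by rewrite emb_perm_funE emb_perm_fun_out // => E; have := hx (s j); rewrite E eqxx.
- by rewrite !emb_perm_fun_out.
Qed.

Definition emb_perm s : {perm T} := perm (@emb_perm_fun_inj s).

Lemma emb_permE s i : emb_perm s (g i) = g (s i).
Proof. by rewrite permE emb_perm_funE. Qed.

Lemma emb_perm_out s x : (forall i, g i != x) -> emb_perm s x = x.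
Proof. by move=> h; rewrite permE emb_perm_fun_out. Qed.

Lemma emb_permM s t : emb_perm (s * t)%g = (emb_perm s * emb_perm t)%g.
Proof.
apply/permP=> x; rewrite permM.
by case: (imgP x) => [[i <-]|hx]; rewrite ?emb_permE ?permM ?emb_perm_out.
Qed.

Lemma emb_perm1 : emb_perm 1%g = 1%g.
Proof.
apply/permP=> x; rewrite perm1.
by case: (imgP x) => [[i <-]|hx]; rewrite ?emb_permE ?perm1 ?emb_perm_out.
Qed.

Lemma emb_perm_tperm a b : emb_perm (tperm a b) = tperm (g a) (g b).
Proof.
apply/permP=> x; case: (imgP x) => [[i <-]|hx].
  by rewrite emb_permE (inj_tperm _ _ _ g_inj).
by rewrite emb_perm_out // tpermD.
Qed.

Lemma odd_emb_perm s : odd_perm (emb_perm s) = odd_perm s.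
Proof.
case: (prod_tpermP s) => ts -> dts.
rewrite (big_morph emb_perm emb_permM emb_perm1).
under eq_bigr do rewrite emb_perm_tperm.
rewrite -(big_map (fun t => (g t.1, g t.2)) xpredT (fun t => tperm t.1 t.2)).
rewrite !odd_perm_prod ?size_map // all_map.
by apply: sub_all dts => -[a b]; rewrite /dpair /= (inj_eq g_inj).
Qed.

Lemma emb_perm_inj : injective emb_perm.
Proof. by move=> s t E; apply/permP=> i; apply: g_inj; rewrite -!emb_permE E. Qed.

End PermEmbedding.

Section PrincipalMinors.
Variable R : comNzRingType.

Definition principal_minor n (A : 'M[R]_n) (S : {set 'I_n}) : R :=
  \det (\matrix_(i < #|S|, j < #|S|) A (enum_val i) (enum_val j)).

Lemma perm_on_emb_enum n (S : {set 'I_n}) (s : 'S_n) :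
  perm_on S s = (s \in [set emb_perm (@enum_val_inj _ S) σ | σ in 'S_#|S|]).
Proof.
set g := @enum_val _ S; have g_inj : injective g := @enum_val_inj _ S.
apply/idP/imsetP => [sS | [σ _ ->]]; last first.
  apply/subsetP => x; apply: contraNT => xS; apply/eqP/emb_perm_out => i.
  by apply: contraNneq xS => <-; apply: enum_valP.
have gS i : s (g i) \in S by rewrite (perm_closed _ sS) enum_valP.
pose f i := enum_rank_in (gS i) (s (g i)).
have fK i : g (f i) = s (g i) by rewrite /g /f enum_rankK_in.
have f_inj : injective f.
  by move=> i j Eij; apply/g_inj/(@perm_inj _ s); rewrite -!fK Eij.
exists (perm f_inj) => //; apply/permP => x.
case: (pickP (fun i => g i == x)) => [i /eqP <-|hx].
  by rewrite emb_permE permE fK.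
rewrite emb_perm_out => [|i]; last by rewrite hx.
apply: (out_perm sS); apply/negP => xS.
by have := hx (enum_rank_in xS x); rewrite /g enum_rankK_in // eqxx.
Qed.

Lemma principal_minorE n (A : 'M[R]_n) (S : {set 'I_n}) :
  \sum_(s : 'S_n | perm_on S s) (-1) ^+ s * \prod_(x in S) A x (s x) =
  principal_minor A S.
Proof.
rewrite (eq_bigl _ _ (@perm_on_emb_enum n S)) big_imset /=; last first.
  by move=> ? ? _ _; apply: emb_perm_inj.
apply: eq_bigr => σ _; rewrite odd_emb_perm big_enum_val.
by congr (_ * _); apply: eq_bigr => i _; rewrite mxE emb_permE.
Qed.

Lemma det_add_diag n (A : 'M[R]_n) (d : 'rV[R]_n) :
  \det (A + diag_mx d) =
  \sum_(S : {set 'I_n}) (\prod_(i in ~: S) d 0 i) * principal_minor A S.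
Proof.
rewrite /determinant.
under eq_bigr => s _ do under eq_bigr => i _ do rewrite !mxE.
under eq_bigr => s _ do rewrite bigA_distr big_distrr.
rewrite exchange_big; apply: eq_bigr => S _ /=.
rewrite -principal_minorE mulr_sumr (bigID (perm_on S)) /=.
rewrite [X in _ + X]big1 ?addr0 => [|s /subsetPn[x]]; last first.
  move=> /[!inE] sx /negbTE xS; rewrite (bigD1 x) //= xS eq_sym.
  by rewrite (negbTE sx) mulr0n mul0r mulr0.
apply: eq_bigr => s sS; rewrite (bigID (mem S)) /=.
rewrite (eq_bigr (fun i => A i (s i))) => [|i ->//].
rewrite [X in _ * (_ * X)](eq_bigr (fun i => d 0 i)) => [|i iS]; last first.
  by rewrite (out_perm sS iS) eqxx mulr1n (negbTE iS).
rewrite [in RHS](eq_bigl (fun i => i \notin S)) => [|i]; last by rewrite in_setC.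
by rewrite mulrA mulrC.
Qed.

End PrincipalMinors.

Lemma principal_minor_map_mx (R R' : comNzRingType) (f : {rmorphism R -> R'})
    n (A : 'M[R]_n) S :
  principal_minor (map_mx f A) S = f (principal_minor A S).
Proof.
by rewrite /principal_minor -det_map_mx; congr (\det _); apply/matrixP => i j; rewrite !mxE.
Qed.

Section BorderedDeterminant.
Variable R : comNzRingType.

Definition corner_mx k (M : 'M[R]_k.+1) : 'M[R]_k :=
  \matrix_(i, j) M (lift ord0 i) (lift ord0 j).

Definition border_row k (M : 'M[R]_k.+1) : 'rV[R]_k := \row_j M ord0 (lift ord0 j).

Definition border_col k (M : 'M[R]_k.+1) : 'cV[R]_k := \col_i M (lift ord0 i) ord0.

Lemma cofactor_border k (M : 'M[R]_k.+1) (j : 'I_k) :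
  cofactor M ord0 (lift ord0 j) =
  - \sum_i M (lift ord0 i) ord0 * cofactor (corner_mx M) i j.
Proof.
case: k M j => [|k] M j; first by case: j.
rewrite /cofactor (expand_det_col _ ord0) mulr_sumr -sumrN.
apply: eq_bigr => i _; rewrite !mxE /cofactor.
have -> : lift (lift ord0 j) ord0 = ord0 by apply/val_inj.
have -> : row' i (col' ord0 (row' ord0 (col' (lift ord0 j) M))) =
          row' i (col' j (corner_mx M)).
  apply/matrixP => a b; rewrite !mxE; congr (M _ _).
  by apply/val_inj; rewrite /= /bump /= leq_add2l addnCA.
rewrite /= add0n addn0 exprD exprS; ring.
Qed.

Lemma det_border k (M : 'M[R]_k.+1) :
  \det M = M ord0 ord0 * \det (corner_mx M) -
           (border_row M *m \adj (corner_mx M) *m border_col M) 0 0.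
Proof.
rewrite (expand_det_row _ ord0) big_ord_recl; congr (_ + _).
  rewrite /cofactor add0n expr0 mul1r; congr (_ * \det _).
  by apply/matrixP => a b; rewrite !mxE.
rewrite mxE -sumrN; under [RHS]eq_bigr do rewrite mxE big_distrl -sumrN /=.
rewrite exchange_big; apply: eq_bigr => j _ /=.
rewrite cofactor_border mulrN mulr_sumr -sumrN; apply: eq_bigr => i _.
by rewrite !mxE; ring.
Qed.

End BorderedDeterminant.

Lemma size_det_linear_mx (F : fieldType) n (M : 'M[{poly F}]_n) :
  (forall i j, size (M i j) <= 2)%N -> (size (\det M) <= n.+1)%N.
Proof.
move=> hM; apply: leq_trans (size_sum _ _ _) _; apply/bigmax_leqP => s _.
rewrite size_Msign; apply: leq_trans (size_poly_prod_leq _ _) _.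
have sum_le : (\sum_(i < n) size (M i (s i)) <= \sum_(i < n) 2)%N by apply: leq_sum.
rewrite sum_nat_const card_ord in sum_le.
rewrite [#|_|]card_ord leq_subLR addnS ltnS; apply: leq_trans sum_le _; lia.
Qed.

Section ResolventForm.
Variables (F : fieldType) (k : nat) (H : 'M[F]_k).

Let Pm : 'M[{poly F}]_k := 'X%:M + map_mx polyC H.

Definition resolvent_form (d : 'rV[F]_k) (v : 'cV[F]_k) : {poly F} :=
  (map_mx polyC d *m \adj Pm *m map_mx polyC v) 0 0.

Lemma resolvent_formBl d1 d2 v :
  resolvent_form d1 v - resolvent_form d2 v = resolvent_form (d1 - d2) v.
Proof. by rewrite /resolvent_form map_mxB !mulmxBl [RHS]mxE [X in _ = _ + X]mxE. Qed.

Let size_det_Pm : size (\det Pm) = k.+1.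
Proof.
rewrite /Pm; case: k H => [|k'] H'; first by rewrite det_mx00 size_poly1.
have -> : 'X%:M + map_mx polyC H' = char_poly_mx (- H').
  by rewrite /char_poly_mx map_mxN opprK.
exact: size_char_poly.
Qed.

Let size_cofactor_Pm i j : (size (cofactor Pm i j) <= k)%N.
Proof.
rewrite /Pm; case: k H i j => [|k'] H' i j; first by case: i.
rewrite /cofactor size_Msign; apply: size_det_linear_mx => a b.
rewrite !mxE; apply: leq_trans (size_polyD _ _) _.
rewrite geq_max size_polyC; apply/andP; split; last by case: (_ != 0).
by case: (_ == _); rewrite ?mulr1n ?mulr0n ?size_polyX ?size_poly0.
Qed.

Lemma size_resolvent_form d v : (size (resolvent_form d v) <= k)%N.
Proof.
rewrite /resolvent_form !mxE; elim/big_ind: _ => [|p q hp hq|i _].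
- by rewrite size_poly0.
- by apply: leq_trans (size_polyD _ _) _; rewrite geq_max hp.
rewrite !mxE mulrC mul_polyC; apply: leq_trans (size_scale_leq _ _) _.
elim/big_ind: _ => [|p q hp hq|j _].
- by rewrite size_poly0.
- by apply: leq_trans (size_polyD _ _) _; rewrite geq_max hp.
by rewrite !mxE mul_polyC; apply: leq_trans (size_scale_leq _ _) _.
Qed.

Lemma resolvent_form_shift d v :
  'X * resolvent_form d v + resolvent_form d (H *m v) =
  \det Pm * ((d *m v) 0 0)%:P.
Proof.
have /matrixP/(_ 0 0) : map_mx polyC d *m \adj Pm *m (Pm *m map_mx polyC v) =
                        \det Pm *: map_mx polyC (d *m v).
  by rewrite mulmxA -(mulmxA _ (\adj Pm)) mul_adj_mx mul_mx_scalar -scalemxAl map_mxM.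
rewrite mulmxDl mul_scalar_mx -map_mxM mulmxDr -scalemxAr !mxE => <-.
by rewrite /resolvent_form !mxE.
Qed.

(* In [resolvent_form_shift], [\det Pm] has size k.+1 and [resolvent_form] size <= k. *)
Lemma resolvent_form_eq0 d v : resolvent_form d v = 0 ->
  resolvent_form d (H *m v) = 0 /\ (d *m v) 0 0 = 0.
Proof.
move=> G0; have := resolvent_form_shift d v; rewrite G0 mulr0 add0r => E.
have [dv0|dv_neq0] := eqVneq ((d *m v) 0 0) 0; first by rewrite E dv0 mulr0.
have := size_resolvent_form d (H *m v).
by rewrite E mulrC mul_polyC size_scale // size_det_Pm ltnn.
Qed.

Lemma resolvent_form_eq0_krylov d c : resolvent_form d c = 0 ->
  forall i, (d *m (H ^+ i *m c)) 0 0 = 0.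
Proof.
move=> G0; suff G0i i : resolvent_form d (H ^+ i *m c) = 0.
  by move=> i; case: (resolvent_form_eq0 (G0i i)).
elim: i => [|i IH]; first by rewrite expr0 mul1mx.
by rewrite exprS -mulmxE -mulmxA; case: (resolvent_form_eq0 IH).
Qed.

End ResolventForm.

Lemma cyclic_vector_orthogonal_eq0 (R : numClosedFieldType) k (H : 'M[R]_k)
    (c : 'cV[R]_k) (d : 'rV[R]_k) :
  cyclic_vector H c -> (forall i, (d *m (H ^+ i *m c)) 0 0 = 0) -> d = 0.
Proof.
rewrite /cyclic_vector row_full_unit -unitmx_tr => K_unit dK0.
have dK : d *m (krylov H c)^T = 0.
  apply/rowP => j; rewrite !mxE -[RHS](dK0 j) !mxE.
  by apply: eq_bigr => i _; rewrite !mxE.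
by rewrite -(mulmxK K_unit d) dK mul0mx.
Qed.

Section ShiftedDeterminant.
Variables (R : numClosedFieldType) (m : nat).
Implicit Types A : 'M[R]_m.+1.

Definition tail_X : 'rV[{poly R}]_m.+1 := \row_i (if i == ord0 then 0 else 'X).

Definition shift_tail_mx A : 'M[{poly R}]_m.+1 := map_mx polyC A + diag_mx tail_X.

Lemma piX_coordE j A : (0 < j)%N ->
  piX_coord j A = \sum_(I : {set 'I_m.+1} | (#|I| == j) && (ord0 \in I)) pminor A I.
Proof.
rewrite /piX_coord; case: eqP => // -> _.
rewrite (big_pred1 [set ord0]) => [|I]; last first.
  apply/andP/eqP => [[/cards1P[x ->]] /set1P <- //|->].
  by rewrite cards1 set11.
rewrite -[pminor _ _]/(principal_minor _ _) -principal_minorE (big_pred1 1%g).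
  by rewrite odd_perm1 expr0 mul1r big_set1 perm1.
by move=> s; apply/idP/eqP => [/perm_on_id -> //|->]; rewrite ?cards1 ?perm_on1.
Qed.

Lemma det_shift_tail_mx A :
  \det (shift_tail_mx A) = \sum_(j < m.+1) 'X^(m - j) * ((pi_map A).1 0 j)%:P.
Proof.
have prod_tail (S : {set 'I_m.+1}) :
    \prod_(i in ~: S) tail_X 0 i =
    if ord0 \in S then 'X^(m.+1 - #|S|) else 0.
  case: ifP => S0; last by rewrite (bigD1 ord0) ?inE ?S0 //= mxE eqxx mul0r.
  rewrite (eq_bigr (fun => 'X)) => [|i]; last first.
    by rewrite !inE mxE; case: eqP => [->|//]; rewrite S0.
  by rewrite prodr_const cardsCs setCK card_ord.
rewrite det_add_diag.
under eq_bigr do rewrite prod_tail principal_minor_map_mx (fun_if (fun x => x * _)) mul0r.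
rewrite -big_mkcond /=.
rewrite (partition_big (fun S : {set 'I_m.+1} => inord #|S|.-1 : 'I_m.+1) xpredT) //=.
apply: eq_bigr => j _; rewrite mxE piX_coordE // rmorph_sum mulr_sumr.
have S_le (S : {set 'I_m.+1}) : (#|S| <= m.+1)%N.
  by apply: leq_trans (max_card _) _; rewrite card_ord.
have S_gt0 (S : {set 'I_m.+1}) : ord0 \in S -> (0 < #|S|)%N.
  by move=> S0; apply/card_gt0P; exists ord0.
apply: eq_big => [S|S /andP[S0 /eqP <-]].
  case S0 : (ord0 \in S); rewrite ?andbF //= andbT.
  move: (S_le S) (S_gt0 S S0) => Sle Sgt.
  by rewrite -val_eqE /= inordK; [case: #|S| Sgt | rewrite prednK].
move: (S_le S) (S_gt0 S S0) => Sle Sgt.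
rewrite inordK; last by rewrite prednK.
by congr ('X^_ * _); case: #|S| Sgt => // c _; rewrite subSS.
Qed.

Lemma det_shift_tail_mx_border A :
  \det (shift_tail_mx A) =
  (A ord0 ord0)%:P * \det ('X%:M + map_mx polyC (mxhat A)) -
  resolvent_form (mxhat A) (firstrow A) (firstcol A).
Proof.
have lift_neq0 (i : 'I_m) : (lift ord0 i == ord0) = false.
  by apply/negbTE; rewrite eq_sym neq_lift.
rewrite det_border.
have -> : corner_mx (shift_tail_mx A) = 'X%:M + map_mx polyC (mxhat A).
  apply/matrixP => i j; rewrite !mxE lift_neq0 (inj_eq lift_inj) addrC.
  by case: (i == j).
have -> : shift_tail_mx A ord0 ord0 = (A ord0 ord0)%:P.
  by rewrite !mxE eqxx mulr1n addr0.
have -> : border_row (shift_tail_mx A) = map_mx polyC (firstrow A).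
  by apply/rowP => j; rewrite !mxE eq_sym lift_neq0 addr0.
have -> : border_col (shift_tail_mx A) = map_mx polyC (firstcol A).
  by apply/colP => i; rewrite !mxE lift_neq0 addr0.
by [].
Qed.

End ShiftedDeterminant.

Theorem lemma2p4 (R : numClosedFieldType) (m : nat) (hm : (1 <= m)%N)
  (A B : 'M[R]_(m.+1)) :
  in_G1 A -> in_G1 B -> pi_map A = pi_map B ->
  mxhat A = mxhat B -> firstcol A = firstcol B ->
  firstrow A = firstrow B.
Proof.
move=> [_ cycA] _ piAB hatAB colAB.
have detAB : \det (shift_tail_mx A) = \det (shift_tail_mx B).
  by rewrite !det_shift_tail_mx piAB.
have a00 : A ord0 ord0 = B ord0 ord0.
  by have := congr1 (fun p : 'rV_m.+1 * 'rV_m => p.1 0 0) piAB; rewrite !mxE.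
move: detAB; rewrite !det_shift_tail_mx_border -hatAB -colAB a00 => /subrI/eqP.
rewrite -subr_eq0 resolvent_formBl => /eqP /resolvent_form_eq0_krylov dK0.
exact/subr0_eq/(cyclic_vector_orthogonal_eq0 cycA dK0).
Qed.
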